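(* Let $\mathbb G=V_1\times V_2$ be a step-two Carnot group and $f\in\mathcal A_h(\mathbb G)$. For $z\in V_2$ define $f_z:V_1\to\mathbb R$ by $f_z(x):=f(x,z)$. Then $f_z$ is affine (in the usual sense) on $V_1$ for every $z\in V_2$.
   Context: A step-two Carnot group is $\mathbb G=V_1\times V_2$, where $V_1,V_2$ are finite-dimensional real vector spaces with $V_2\neq\{0\}$, equipped with a bilinear skew-symmetric map $[\cdot,\cdot]:V_1\times V_1\to V_2$ with $\operatorname{span}\{[x,x']:x,x'\in V_1\}=V_2$, and group law $(x,z)\cdot(x',z')=(x+x',z+z'+[x,x'])$. $\mathcal A_h(\mathbb G)$ is the space of $h$-affine maps $f:\mathbb G\to\mathbb R$, i.e. such that for all $(x,z)\in\mathbb G$, $y\in V_1$, $t\mapsto f((x,z)\cdot(ty,0))$ is affine. *)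

From HB Require Import structures.
From mathcomp Require Import all_boot all_order all_algebra.
From mathcomp Require Import reals.
Set Implicit Arguments. Unset Strict Implicit. Unset Printing Implicit Defensive.
Import Order.TTheory GRing.Theory Num.Theory.
Local Open Scope ring_scope.

Definition bilinear_map (R : realType) (V1 V2 : vectType R)
  (br : V1 -> V1 -> V2) : Prop :=
  (forall (a : R) (x y x' : V1), br (a *: x + y) x' = a *: br x x' + br y x') /\
  (forall (a : R) (x x' y' : V1), br x (a *: x' + y') = a *: br x x' + br x y').

Definition skew_map (R : realType) (V1 V2 : vectType R)
  (br : V1 -> V1 -> V2) : Prop := forall x x' : V1, br x x' = - br x' x.

(* span {[x,x'] : x, x' in V1} = V2 : the only subspace containing all
   brackets is the whole space. *)
Definition brackets_span (R : realType) (V1 V2 : vectType R)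
  (br : V1 -> V1 -> V2) : Prop :=
  forall U : {vspace V2}, (forall x x' : V1, br x x' \in U) -> U = fullv.

Definition step_two_carnot (R : realType) (V1 V2 : vectType R)
  (br : V1 -> V1 -> V2) : Prop :=
  [/\ (fullv : {vspace V2}) != 0%VS, bilinear_map br, skew_map br
    & brackets_span br].

Definition carnot_mul (R : realType) (V1 V2 : vectType R)
  (br : V1 -> V1 -> V2) (p q : V1 * V2) : V1 * V2 :=
  (p.1 + q.1, p.2 + q.2 + br p.1 q.1).

Definition affine_R (R : realType) (g : R -> R) : Prop :=
  exists a b : R, forall t : R, g t = a * t + b.

Definition affine_map (R : realType) (V : vectType R) (g : V -> R) : Prop :=
  exists (L : V -> R) (c : R),
    (forall (a : R) (u v : V), L (a *: u + v) = a * L u + L v) /\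
    (forall x : V, g x = L x + c).

Definition h_affine (R : realType) (V1 V2 : vectType R)
  (br : V1 -> V1 -> V2) (f : V1 * V2 -> R) : Prop :=
  forall (p : V1 * V2) (y : V1),
    affine_R (fun t : R => f (carnot_mul br p (t *: y, 0))).

(* Fix x, y in V1 and z in V2. On the points (a x + b y, z + t [x, y]) an
   h-affine f becomes an h-affine function G(a, b, t) on the Heisenberg group,
   and f (x + s y, z) = G(1, s, 0). Horizontal segments through vertical points
   show that G is affine in t, with a slope K(a, b) that is affine along lines.
   The horizontal line s |-> (1, s, s) shows that G(1, s, 0) + s K(1, s) is affine;
   comparing it with its dilate by 2, whose twist is four times larger, forces
   K(1, s) to be constant, so G(1, s, 0) is affine. A function affine on every
   line of V1 is affine. *)

From mathcomp Require Import all_boot all_order all_algebra.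
From mathcomp Require Import reals.
From mathcomp Require Import ring lra.
Import Order.TTheory GRing.Theory Num.Theory.
Set Implicit Arguments. Unset Strict Implicit. Unset Printing Implicit Defensive.
Local Open Scope ring_scope.

Section AffineR.
Variable R : realType.
Implicit Types (phi psi : R -> R) (c d s : R).

Lemma affine_RE phi : affine_R phi -> forall s, phi s = phi 0 + s * (phi 1 - phi 0).
Proof. by move=> [a [b E]] s; rewrite !E; ring. Qed.

Lemma eq_affine_R phi psi : affine_R phi -> phi =1 psi -> affine_R psi.
Proof. by move=> [a [b E]] eq_phi; exists a, b => s; rewrite -eq_phi E. Qed.

Lemma affine_R_lin c d : affine_R (fun s => c * s + d).
Proof. by exists c, d. Qed.

Lemma affine_RD phi psi : affine_R phi -> affine_R psi -> affine_R (phi \+ psi).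
Proof.
by move=> [a [b E]] [a' [b' E']]; exists (a + a'), (b + b') => s /=; rewrite E E'; ring.
Qed.

Lemma affine_RZ c phi : affine_R phi -> affine_R (fun s => c * phi s).
Proof. by move=> [a [b E]]; exists (c * a), (c * b) => s; rewrite E; ring. Qed.

Lemma affine_R_reflect phi : affine_R phi -> phi (-1) + phi 1 = 2 * phi 0.
Proof. by move=> [a [b E]]; rewrite !E; ring. Qed.

Lemma affine_R_mul_id phi :
  affine_R phi -> affine_R (fun s => s * phi s) -> forall s, phi s = phi 0.
Proof.
move=> [a [b E]] /affine_R_reflect; rewrite !E => quad s.
have a0 : a = 0.
  have : 2 * a = 0 by lra.
  by move/eqP; rewrite mulf_eq0 pnatr_eq0 => /eqP.
by rewrite E a0 !mul0r.
Qed.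

End AffineR.

(* h-affinity on the Heisenberg group R^3 with bracket [(a, b), (u, v)] = a v - b u. *)
Definition heisenberg_h_affine (R : realType) (G : R -> R -> R -> R) : Prop :=
  forall a b t u v : R,
    affine_R (fun s => G (a + s * u) (b + s * v) (t + s * (a * v - b * u))).

Lemma heisenberg_h_affine_translate (R : realType) (G : R -> R -> R -> R) (a0 b0 : R) :
  heisenberg_h_affine G ->
  heisenberg_h_affine (fun a b t => G (a0 + a) (b0 + b) (t + (a0 * b - b0 * a))).
Proof.
move=> HG a b t u v; apply: (eq_affine_R (HG (a0 + a) (b0 + b) (t + (a0 * b - b0 * a)) u v)).
by move=> s; congr G; ring.
Qed.

(* The point (0, 0, t) is the midpoint of a horizontal segment whose endpoints
   (-1, -t, t) and (1, t, t) move along horizontal lines as t varies. *)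
Lemma heisenberg_h_affine_vertical0 (R : realType) (G : R -> R -> R -> R) :
  heisenberg_h_affine G -> affine_R (G 0 0).
Proof.
move=> HG.
have left_end : affine_R (fun t => G (-1) (- t) t).
  by apply: (eq_affine_R (HG (-1) 0 0 0 (-1))) => s; congr G; ring.
have right_end : affine_R (fun t => G 1 t t).
  by apply: (eq_affine_R (HG 1 0 0 0 1)) => s; congr G; ring.
apply: (eq_affine_R (affine_RZ (2^-1) (affine_RD left_end right_end))) => t /=.
have := affine_R_reflect (HG 0 0 t 1 t).
rewrite !add0r !mul0r !subrr !mulr0 !addr0 !mulN1r !mul1r => ->.
by field.
Qed.

Section HeisenbergHAffine.
Variables (R : realType) (G : R -> R -> R -> R).
Hypothesis HG : heisenberg_h_affine G.

Let slope a b := G a b 1 - G a b 0.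

Lemma heisenberg_vertical a b t : G a b t = G a b 0 + t * slope a b.
Proof.
have := affine_RE (heisenberg_h_affine_vertical0 (heisenberg_h_affine_translate a b HG)) t.
by rewrite !addr0 !mulr0 subrr !addr0.
Qed.

Lemma heisenberg_slope_line a b u v :
  affine_R (fun s => slope (a + s * u) (b + s * v)).
Proof.
apply: (eq_affine_R (affine_RD (HG a b 1 u v) (affine_RZ (-1) (HG a b 0 u v)))) => s /=.
rewrite (heisenberg_vertical _ _ (1 + _)) (heisenberg_vertical _ _ (0 + _)).
by rewrite /slope; ring.
Qed.

Lemma heisenberg_twisted_line a b u v :
  affine_R (fun s =>
    G (a + s * u) (b + s * v) 0 + s * (a * v - b * u) * slope (a + s * u) (b + s * v)).
Proof.
apply: (eq_affine_R (HG a b 0 u v)) => s.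
by rewrite heisenberg_vertical add0r.
Qed.

Lemma heisenberg_ray u v c :
  G (c * u) (c * v) 0 = G 0 0 0 + c * (G u v 0 - G 0 0 0).
Proof.
have := affine_RE (HG 0 0 0 u v) c.
by rewrite !add0r !mul0r !subrr !mulr0 !mul1r.
Qed.

Lemma heisenberg_slope_ray u v c :
  slope (c * u) (c * v) = slope 0 0 + c * (slope u v - slope 0 0).
Proof.
have := affine_RE (heisenberg_slope_line 0 0 u v) c.
by rewrite !add0r !mul0r !mul1r.
Qed.

Lemma heisenberg_unit_line : affine_R (fun r => G 1 r 0 + r * slope 1 r).
Proof.
apply: (eq_affine_R (heisenberg_twisted_line 1 0 0 1)) => r.
by rewrite !(mulr0, mul0r, mulr1, addr0, add0r, subr0).
Qed.

Lemma heisenberg_slope_const s : slope 1 s = slope 1 0.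
Proof.
have line1 := heisenberg_unit_line.
have line2 : affine_R (fun r =>
    2 * G 1 r 0 - G 0 0 0 + 4 * r * (2 * slope 1 r - slope 0 0)).
  apply: (eq_affine_R (heisenberg_twisted_line 2 0 0 2)) => r.
  rewrite (_ : 2 + r * 0 = 2 * 1); last by ring.
  rewrite (_ : 0 + r * 2 = 2 * r); last by ring.
  by rewrite heisenberg_ray heisenberg_slope_ray; ring.
have twist : affine_R (fun r => r * slope 1 r).
  apply: (eq_affine_R (affine_RD (affine_RZ 6^-1 (affine_RD line2 (affine_RZ (-2) line1)))
    (affine_R_lin (2 / 3 * slope 0 0) (6^-1 * G 0 0 0)))) => r /=.
  by field.
have slope1 : affine_R (slope 1).
  apply: (eq_affine_R (heisenberg_slope_line 1 0 0 1)) => r.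
  by rewrite mulr0 addr0 mulr1 add0r.
exact: affine_R_mul_id slope1 twist s.
Qed.

Lemma heisenberg_h_affine_horizontal : affine_R (fun s => G 1 s 0).
Proof.
apply: (eq_affine_R (affine_RD heisenberg_unit_line (affine_R_lin (- slope 1 0) 0))) => s /=.
by rewrite heisenberg_slope_const; ring.
Qed.

End HeisenbergHAffine.

Section SkewBilinear.
Variables (R : realType) (V1 V2 : vectType R) (br : V1 -> V1 -> V2).
Hypotheses (br_bilinear : bilinear_map br) (br_skew : skew_map br).

Lemma br0l x' : br 0 x' = 0.
Proof. by have := br_bilinear.1 (-1) 0 0 x'; rewrite scaler0 addr0 scaleN1r addNr. Qed.

Lemma br0r x : br x 0 = 0.
Proof. by have := br_bilinear.2 (-1) x 0 0; rewrite scaler0 addr0 scaleN1r addNr. Qed.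

Lemma brZl a x x' : br (a *: x) x' = a *: br x x'.
Proof. by have := br_bilinear.1 a x 0 x'; rewrite !addr0 br0l addr0. Qed.

Lemma brZr a x x' : br x (a *: x') = a *: br x x'.
Proof. by have := br_bilinear.2 a x x' 0; rewrite !addr0 br0r addr0. Qed.

Lemma brxx x : br x x = 0.
Proof.
have /eqP := br_skew x x.
by rewrite -subr_eq0 opprK -mulr2n -scaler_nat scaler_eq0 pnatr_eq0 => /eqP.
Qed.

Lemma br_comb a b u v x y :
  br (a *: x + b *: y) (u *: x + v *: y) = (a * v - b * u) *: br x y.
Proof.
rewrite br_bilinear.1 brZl !br_bilinear.2 !brZr !brxx (br_skew y x).
by rewrite !scaler0 !add0r !addr0 !scalerA scalerN -scaleNr -scalerDl.
Qed.

End SkewBilinear.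

Lemma h_affine_heisenberg_slice (R : realType) (V1 V2 : vectType R)
    (br : V1 -> V1 -> V2) (f : V1 * V2 -> R) (x y : V1) (z : V2) :
  bilinear_map br -> skew_map br -> h_affine br f ->
  heisenberg_h_affine (fun a b t => f (a *: x + b *: y, z + t *: br x y)).
Proof.
move=> br_bilinear br_skew Hf a b t u v.
apply: (eq_affine_R (Hf (a *: x + b *: y, z + t *: br x y) (u *: x + v *: y))) => s.
rewrite /carnot_mul /= scalerDr !scalerA (br_comb br_bilinear br_skew) addr0.
congr (f (_, _)); first by rewrite !scalerDl addrACA.
by rewrite -addrA -scalerDl; congr (_ + _ *: _); ring.
Qed.

Lemma affine_map_of_lines (R : realType) (V : vectType R) (g : V -> R) :
  (forall u v : V, affine_R (fun s => g (u + s *: v))) -> affine_map g.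
Proof.
move=> g_lines; pose L v := g v - g 0.
have LZ a u : L (a *: u) = a * L u.
  have := affine_RE (g_lines 0 u) a.
  by rewrite /L !add0r scale0r scale1r => ->; ring.
have LD u v : L (u + v) = L u + L v.
  have := affine_RE (g_lines u (v - u)) 2^-1.
  have -> : u + 2^-1 *: (v - u) = 2^-1 *: (u + v).
    rewrite scalerBr scalerDr addrCA addrC; congr (_ + _).
    by rewrite -{1}[u]scale1r -scalerBl; congr (_ *: _); field.
  rewrite scale0r scale1r addr0 subrKC => mid.
  have := LZ 2^-1 (u + v); rewrite /L mid => half.
  by rewrite /L; lra.
exists L, (g 0); split=> [a u v | u]; first by rewrite LD LZ.
by rewrite /L subrK.
Qed.

Theorem corollary3p8 (R : realType) (V1 V2 : vectType R)
  (br : V1 -> V1 -> V2) (f : V1 * V2 -> R) :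
  step_two_carnot br -> h_affine br f ->
  forall z : V2, affine_map (fun x : V1 => f (x, z)).
Proof.
move=> [_ br_bilinear br_skew _] Hf z; apply: affine_map_of_lines => x y.
have slice := h_affine_heisenberg_slice x y z br_bilinear br_skew Hf.
apply: (eq_affine_R (heisenberg_h_affine_horizontal slice)) => s /=.
by rewrite scale1r scale0r addr0.
Qed.
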